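(* Let $G$ be a finitely generated group and $H$ a subgroup of finite index in $G$. Then $\gamma_H^c\preceq\gamma_G^c$.
   Context: For a finitely generated group $G$ with a fixed finite generating set $S$, let $B(n)$ denote the ball of radius $n$ about the identity in the word metric induced by $S$. The conjugacy growth function is $\gamma_G^c(n)=\#\{\text{conjugacy classes } C \text{ of } G : C\cap B(n)\neq\emptyset\}$; for $H$ it is computed with respect to a finite generating set of $H$ and conjugacy in $H$. For functions $f,g:\mathbb N\to\mathbb N$, write $f\preceq g$ if there exist constants $C,D$ such that $f(n)\le C g(Dn)$ for all $n\in\mathbb N$. *)

From Stdlib Require Import List Arith ClassicalEpsilon.
Import ListNotations.
Set Implicit Arguments.

Record group := Group {
  carrier :> Type;
  gmul : carrier -> carrier -> carrier;
  gone : carrier;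
  ginv : carrier -> carrier;
  gmulA : forall x y z, gmul x (gmul y z) = gmul (gmul x y) z;
  gmul1 : forall x, gmul gone x = x;
  gmulV : forall x, gmul (ginv x) x = gone
}.

Section Defs.
Variable G : group.

Definition eval_word (w : list G) : G := fold_right (@gmul G) (@gone G) w.

Definition alphabet (S : list G) : list G := S ++ map (@ginv G) S.

(* All words of length <= n over the alphabet A. *)
Fixpoint words (A : list G) (n : nat) : list (list G) :=
  match n with
  | 0 => [ [] ]
  | S m => [] :: flat_map (fun a => map (cons a) (words A m)) A
  end.

Definition ball (S : list G) (n : nat) : list G := map eval_word (words (alphabet S) n).

Definition generates (S : list G) (P : G -> Prop) : Prop :=
  (forall s, In s S -> P s) /\
  (forall g, P g -> exists w, Forall (fun a => In a (alphabet S)) w /\ eval_word w = g).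

Definition is_subgroup (P : G -> Prop) : Prop :=
  P (@gone G) /\ (forall x y, P x -> P y -> P (@gmul G x y)) /\ (forall x, P x -> P (@ginv G x)).

(* H has finite index: finitely many left cosets r H cover G. *)
Definition finite_index (P : G -> Prop) : Prop :=
  exists reps : list G, forall g, exists r, In r reps /\ P (@gmul G (@ginv G r) g).

(* Conjugacy in the subgroup P (take P = fun _ => True for conjugacy in G). *)
Definition conj_in (P : G -> Prop) (x y : G) : Prop :=
  exists h, P h /\ y = @gmul G (@gmul G (@ginv G h) x) h.

Definition conj_inb (P : G -> Prop) (x y : G) : bool :=
  if excluded_middle_informative (conj_in P x y) then true else false.

(* Remove from a list every element equivalent (eqb) to a later one. When eqb
   decides an equivalence relation, the length of the result is the number of
   equivalence classes meeting the list. *)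
Fixpoint dedup_by (eqb : G -> G -> bool) (l : list G) : list G :=
  match l with
  | [] => []
  | x :: l' => if existsb (eqb x) l' then dedup_by eqb l' else x :: dedup_by eqb l'
  end.

Definition conj_growth (P : G -> Prop) (S : list G) (n : nat) : nat :=
  length (dedup_by (conj_inb P) (ball S n)).

End Defs.

Definition preceq (f g : nat -> nat) : Prop :=
  exists C D : nat, forall n : nat, f n <= C * g (D * n).

Arguments eval_word {G} w.
Arguments alphabet {G} S.
Arguments words {G} A n.
Arguments ball {G} S n.
Arguments generates {G} S P.
Arguments is_subgroup {G} P.
Arguments finite_index {G} P.
Arguments conj_in {G} P x y.
Arguments conj_inb {G} P x y.
Arguments dedup_by {G} eqb l.
Arguments conj_growth {G} P S n.

(* If every generator of H is a word of length at most D in the generators of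
   G, then B_T(n) ⊆ B_S(Dn), so each H-class meeting B_T(n) lies in a G-class
   meeting B_S(Dn).  A G-class x^G splits into at most [G:H] classes of H:
   writing a conjugator as u = r h with r in a fixed set of coset
   representatives and h in H, the conjugate x^u is H-conjugate to x^r.
   Hence the H-count at n is at most [G:H] times the G-count at Dn. *)
From Stdlib Require Import List Lia ClassicalEpsilon.
Import ListNotations.

Arguments gmul {g} _ _.
Arguments ginv {g} _.
Arguments gone {g}.
Arguments gmulA {g} x y z.
Arguments gmul1 {g} x.
Arguments gmulV {g} x.

Set Implicit Arguments.
Unset Strict Implicit.

Lemma dedup_free_length_le (A : Type) (eqb : A -> A -> bool) :
  (forall x y, eqb x y = true -> eqb y x = true) ->
  (forall x y z, eqb x y = true -> eqb y z = true -> eqb x z = true) ->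
  forall R L, ForallOrdPairs (fun x y => eqb x y = false) R ->
  (forall x, In x R -> exists a, In a L /\ eqb x a = true) ->
  length R <= length L.
Proof.
  intros Hsym Htrans R. induction R as [|x R IH]; intros L Hfree Hcover; simpl.
  - lia.
  - inversion Hfree as [|? ? Hx HR]; subst.
    destruct (Hcover x (or_introl eq_refl)) as [a [Ha Hxa]].
    apply in_split in Ha. destruct Ha as [L1 [L2 ->]].
    assert (length R <= length (L1 ++ L2)).
    { apply IH; auto. intros y Hy.
      destruct (Hcover y (or_intror Hy)) as [b [Hb Hyb]].
      apply in_app_or in Hb. destruct Hb as [Hb|[<-|Hb]].
      - exists b. auto using in_or_app.
      - rewrite Forall_forall in Hx. specialize (Hx y Hy).
        assert (eqb x y = true) by eauto. congruence.
      - exists b. auto using in_or_app. }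
    rewrite length_app in *. simpl. lia.
Qed.

Section GroupFacts.
Variable G : group.
Local Notation "x ⋅ y" := (@gmul G x y) (at level 40, left associativity).
Local Notation inv := (@ginv G).
Local Notation e := (@gone G).

Lemma gmulrV (x : G) : x ⋅ inv x = e.
Proof.
  rewrite <- (gmul1 (x ⋅ inv x)), <- (gmulV (inv x)) at 1.
  rewrite <- gmulA, (gmulA (inv x) x (inv x)), gmulV, gmul1.
  apply gmulV.
Qed.

Lemma gmulr1 (x : G) : x ⋅ e = x.
Proof. rewrite <- (gmulV x), gmulA, gmulrV, gmul1. reflexivity. Qed.

Lemma ginv_unique (a b : G) : a ⋅ b = e -> a = inv b.
Proof. intro Hab. rewrite <- (gmulr1 a), <- (gmulrV b), gmulA, Hab, gmul1. reflexivity. Qed.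

Lemma ginvM (a b : G) : inv (a ⋅ b) = inv b ⋅ inv a.
Proof.
  symmetry. apply ginv_unique.
  rewrite <- gmulA, (gmulA (inv a) a b), gmulV, gmul1, gmulV. reflexivity.
Qed.

Lemma ginvK (a : G) : inv (inv a) = a.
Proof. symmetry. apply ginv_unique, gmulrV. Qed.

Lemma ginv1 : inv e = e.
Proof. symmetry. apply ginv_unique, gmul1. Qed.

Lemma conj_inbP (P : G -> Prop) x y : conj_inb P x y = true <-> conj_in P x y.
Proof.
  unfold conj_inb. destruct (excluded_middle_informative (conj_in P x y));
    split; auto; discriminate.
Qed.

Section ConjugacyInSubgroup.
Variable P : G -> Prop.
Hypothesis P_subgroup : is_subgroup P.

Lemma conj_in_refl x : conj_in P x x.
Proof.
  destruct P_subgroup as [P1 _]. exists e. split; auto.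
  rewrite ginv1, gmul1, gmulr1. reflexivity.
Qed.

Lemma conj_in_sym x y : conj_in P x y -> conj_in P y x.
Proof.
  destruct P_subgroup as [_ [_ PV]]. intros [h [Ph ->]]. exists (inv h). split; auto.
  rewrite ginvK, !gmulA, gmulrV, gmul1, <- gmulA, gmulrV, gmulr1. reflexivity.
Qed.

Lemma conj_in_trans x y z : conj_in P x y -> conj_in P y z -> conj_in P x z.
Proof.
  destruct P_subgroup as [_ [PM _]]. intros [h [Ph ->]] [k [Pk ->]].
  exists (h ⋅ k). split; auto. rewrite ginvM, !gmulA. reflexivity.
Qed.

Lemma conj_inb_sym x y : conj_inb P x y = true -> conj_inb P y x = true.
Proof. rewrite !conj_inbP. apply conj_in_sym. Qed.

Lemma conj_inb_trans x y z :
  conj_inb P x y = true -> conj_inb P y z = true -> conj_inb P x z = true.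
Proof. rewrite !conj_inbP. apply conj_in_trans. Qed.

End ConjugacyInSubgroup.

Lemma conj_in_coset_reps (P : G -> Prop) (reps : list G) w x :
  (forall g, exists r, In r reps /\ P (inv r ⋅ g)) ->
  conj_in (fun _ => True) w x ->
  exists r, In r reps /\ conj_in P (inv r ⋅ w ⋅ r) x.
Proof.
  intros Hreps [u [_ ->]]. destruct (Hreps u) as [r [Hr Ph]].
  exists r. split; auto. exists (inv r ⋅ u). split; auto.
  rewrite ginvM, ginvK, !gmulA.
  rewrite <- (gmulA (inv u) r (inv r)), gmulrV, gmulr1.
  rewrite <- (gmulA (inv u ⋅ w) r (inv r)), gmulrV, gmulr1. reflexivity.
Qed.

Lemma in_dedup_by (eqb : G -> G -> bool) l y : In y (dedup_by eqb l) -> In y l.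
Proof.
  induction l as [|x l IH]; simpl; auto.
  destruct (existsb (eqb x) l); simpl; intuition.
Qed.

Lemma dedup_by_free (eqb : G -> G -> bool) l :
  ForallOrdPairs (fun x y => eqb x y = false) (dedup_by eqb l).
Proof.
  induction l as [|x l IH]; simpl; [constructor|].
  destruct (existsb (eqb x) l) eqn:Ex; auto.
  constructor; auto. apply Forall_forall. intros y Hy.
  apply in_dedup_by in Hy. destruct (eqb x y) eqn:Exy; auto.
  assert (existsb (eqb x) l = true) by (apply existsb_exists; eauto).
  congruence.
Qed.

Lemma dedup_by_cover (eqb : G -> G -> bool) l :
  (forall x, eqb x x = true) ->
  (forall x y z, eqb x y = true -> eqb y z = true -> eqb x z = true) ->
  forall z, In z l -> exists w, In w (dedup_by eqb l) /\ eqb z w = true.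
Proof.
  intros Hrefl Htrans. induction l as [|x l IH]; simpl; [tauto|].
  intros z Hz. destruct (existsb (eqb x) l) eqn:Ex.
  - destruct Hz as [<-|Hz]; auto.
    apply existsb_exists in Ex. destruct Ex as [y [Hy Hxy]].
    destruct (IH y Hy) as [w [Hw Hyw]]. eauto.
  - destruct Hz as [<-|Hz].
    + exists x. simpl; auto.
    + destruct (IH z Hz) as [w [Hw Hzw]]. exists w. simpl; auto.
Qed.

Lemma conj_growth_le_index (H : G -> Prop) (reps : list G) S T n m :
  is_subgroup H ->
  (forall g, exists r, In r reps /\ H (inv r ⋅ g)) ->
  incl (ball T n) (ball S m) ->
  conj_growth H T n <= length reps * conj_growth (fun _ => True) S m.
Proof.
  intros Hsub Hreps Hball. unfold conj_growth.
  assert (Htotal : is_subgroup (G:=G) (fun _ => True)) by (repeat split).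
  set (classesG := dedup_by (conj_inb (fun _ => True)) (ball S m)).
  set (L := flat_map (fun w => map (fun r => inv r ⋅ w ⋅ r) reps) classesG).
  replace (length reps * length classesG) with (length L).
  2: { unfold L. clear. induction classesG as [|w ws IH]; simpl; [lia|].
       rewrite length_app, length_map, IH. lia. }
  apply dedup_free_length_le with (eqb := conj_inb H).
  - apply conj_inb_sym; auto.
  - apply conj_inb_trans; auto.
  - apply dedup_by_free.
  - intros x Hx. apply in_dedup_by, Hball in Hx.
    destruct (@dedup_by_cover (conj_inb (fun _ => True)) (ball S m)) with (z := x)
      as [w [Hw Hxw]]; auto.
    + intro y. apply conj_inbP, conj_in_refl; auto.
    + apply conj_inb_trans; auto.
    + apply conj_inbP, (conj_in_sym Htotal) in Hxw.
      destruct (conj_in_coset_reps Hreps Hxw) as [r [Hr Hconj]].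
      exists (inv r ⋅ w ⋅ r). split.
      * apply in_flat_map. exists w. split; auto. apply in_map_iff. eauto.
      * apply conj_inbP, conj_in_sym; auto.
Qed.

Lemma in_words (A : list G) n w :
  In w (words A n) <-> Forall (fun a => In a A) w /\ length w <= n.
Proof.
  revert w. induction n as [|n IH]; intro w; simpl.
  - split.
    + intros [<-|[]]. simpl; auto.
    + intros [_ Hl]. destruct w; simpl in *; auto; lia.
  - split.
    + intros [<-|Hw]; [simpl; split; auto; lia|].
      apply in_flat_map in Hw. destruct Hw as [a [Ha Hw]].
      apply in_map_iff in Hw. destruct Hw as [w' [<- Hw']].
      apply IH in Hw'. destruct Hw'. simpl. split; auto. lia.
    + intros [Hf Hl]. destruct w as [|a w']; auto. right.
      inversion Hf; subst. apply in_flat_map. exists a. split; auto.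
      apply in_map, IH. simpl in Hl. split; auto; lia.
Qed.

Lemma in_ball (S : list G) n g :
  In g (ball S n) <->
  exists w, Forall (fun a => In a (alphabet S)) w /\ length w <= n /\ eval_word w = g.
Proof.
  unfold ball. rewrite in_map_iff. split.
  - intros [w [<- Hw]]. apply in_words in Hw. destruct Hw. eauto.
  - intros [w [Hf [Hl <-]]]. exists w. split; auto. apply in_words; auto.
Qed.

Lemma eval_word_app (w1 w2 : list G) : eval_word (w1 ++ w2) = eval_word w1 ⋅ eval_word w2.
Proof.
  induction w1 as [|a w1 IH]; simpl.
  - rewrite gmul1. reflexivity.
  - unfold eval_word in *. simpl. rewrite IH, gmulA. reflexivity.
Qed.

Lemma word_length_uniform_bound (A l : list G) :
  (forall a, In a l -> exists w, Forall (fun b => In b A) w /\ eval_word w = a) ->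
  exists D, forall a, In a l ->
    exists w, Forall (fun b => In b A) w /\ length w <= D /\ eval_word w = a.
Proof.
  induction l as [|x l IH]; intro Hl.
  - exists 0. simpl; tauto.
  - destruct IH as [D HD]; [intros a Ha; apply Hl; simpl; auto|].
    destruct (Hl x (or_introl eq_refl)) as [wx [Hx Ex]].
    exists (max D (length wx)). intros a [<-|Ha].
    + exists wx. repeat split; auto. lia.
    + destruct (HD a Ha) as [w [Hw [Hlen Ew]]]. exists w. repeat split; auto. lia.
Qed.

Lemma ball_incl_scaled (S T : list G) D n :
  (forall a, In a (alphabet T) ->
     exists w, Forall (fun b => In b (alphabet S)) w /\ length w <= D /\ eval_word w = a) ->
  incl (ball T n) (ball S (D * n)).
Proof.
  intros HD g Hg. apply in_ball in Hg. apply in_ball.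
  destruct Hg as [w [Hf [Hl <-]]]. revert n Hl.
  induction w as [|a w IH]; intros n Hl.
  - exists []. simpl. repeat split; auto. lia.
  - inversion Hf as [|? ? Ha Hw]; subst.
    destruct n as [|n]; simpl in Hl; [lia|].
    destruct (HD a Ha) as [wa [Hwa [Hla Ea]]].
    destruct (IH Hw n ltac:(lia)) as [w' [Hw' [Hl' E']]].
    exists (wa ++ w'). repeat split.
    + apply Forall_app; auto.
    + rewrite length_app. nia.
    + rewrite eval_word_app, Ea, E'. reflexivity.
Qed.

End GroupFacts.

Theorem lemma1 (G : group) (S : list G) (H : G -> Prop) (T : list G) :
  generates S (fun _ => True) ->
  is_subgroup H ->
  finite_index H ->
  generates T H ->
  preceq (conj_growth H T) (conj_growth (fun _ => True) S).
Proof.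
  intros [_ HS] Hsub [reps Hreps] _.
  destruct (@word_length_uniform_bound G (alphabet S) (alphabet T)) as [D HD].
  { intros a _. apply HS. exact I. }
  exists (length reps), D. intro n.
  apply conj_growth_le_index; auto.
  apply ball_incl_scaled. exact HD.
Qed.
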